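(* Let $(X,\mathcal{B})$ be an $\mathrm{SQS}(v)$ and let $B = \{x_1,x_2,x_3,x_4\} \in \mathcal{B}$. Let $p$ be the probability that a block is available and $q = 1-p$. Then \[\mathcal{R}(p) = 1 - 4q^{r_1-1} + 6q^{2r_1-r_2-1} - 4q^{3r_1-3r_2} + q^{4r_1-6r_2+2},\] where $r_1 = \binom{v-1}{2}/3$ and $r_2 = \binom{v-2}{1}/2$.
   Context: A Steiner quadruple system $\mathrm{SQS}(v)$ is a $3$-$(v,4,1)$-design: a set $X$ of $v$ points with a collection $\mathcal{B}$ of $4$-subsets (blocks) such that every $3$-subset of $X$ lies in exactly one block; $r_1$ is the number of blocks containing a given point and $r_2$ the number containing a given pair of points. Reliability model: fix a block $B\in\mathcal{B}$. A repair set for $B$ is a subset $\mathcal{P}\subseteq \mathcal{B}\setminus\{B\}$ with $B \subseteq \bigcup_{B'\in\mathcal{P}} B'$. Each block of $\mathcal{B}\setminus\{B\}$ is, independently of the others, available with probability $p\in[0,1]$; a repair set is available if all of its blocks are available. $\mathcal{R}(p)$ is the probability that at least one available repair set for $B$ exists. *)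

From HB Require Import structures.
From mathcomp Require Import all_boot all_order all_algebra.
Set Implicit Arguments. Unset Strict Implicit. Unset Printing Implicit Defensive.
Import Order.TTheory GRing.Theory Num.Theory.

Definition is_SQS (v : nat) (blocks : {set {set 'I_v}}) : Prop :=
  (forall b, b \in blocks -> #|b| = 4) /\
  (forall T : {set 'I_v}, #|T| = 3 ->
     exists! b, b \in blocks /\ T \subset b).

Definition is_repair_set (v : nat) (blocks : {set {set 'I_v}})
  (B : {set 'I_v}) (P : {set {set 'I_v}}) : bool :=
  (P \subset blocks :\ B) && (B \subset cover P).

Local Open Scope ring_scope.

(* R(p): each block of blocks \ {B} is available independently with
   probability p. Sum over the set A of available blocks of the probability
   of that outcome, times the indicator that some repair set consists
   only of available blocks. *)
Definition reliability (R : nzRingType) (v : nat) (blocks : {set {set 'I_v}})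
  (B : {set 'I_v}) (p : R) : R :=
  \sum_(A in powerset (blocks :\ B))
     (p ^+ #|A| * (1 - p) ^+ (#|blocks :\ B| - #|A|)%N) *
     (([exists P in powerset A, is_repair_set blocks B P] : bool)%:R).

Definition r1 (v : nat) : nat := 'C(v.-1, 2) %/ 3.
Definition r2 (v : nat) : nat := 'C(v.-2, 1) %/ 2.

From HB Require Import structures.
From mathcomp Require Import all_boot all_order all_algebra.
From mathcomp Require Import zify ring.
Set Implicit Arguments. Unset Strict Implicit. Unset Printing Implicit Defensive.
Import Order.TTheory GRing.Theory Num.Theory.

(* A family of available blocks contains a repair set for B iff it covers B.
   By inclusion-exclusion over the set T of points of B left uncovered,
   R(p) = sum_(T <= B) (-1)^|T| q^N(T), where q^N(T) is the probability that
   none of the N(T) blocks other than B meeting T is available.  In an SQS two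
   blocks share at most two points, so a block b <> B meets T in n_b <= 2 points
   and [n_b > 0] = n_b - C(n_b, 2); double counting point and pair incidences
   then gives N(T) = |T| (r1 - 1) - C(|T|, 2) (r2 - 1), a function of |T|. *)

Lemma card_set_sum (I : finType) (A : {set I}) (P : pred I) :
  #|[set x in A | P x]| = \sum_(x in A) P x.
Proof.
rewrite -sum1_card big_mkcond [RHS]big_mkcond /=.
by apply: eq_bigr => x _; rewrite !inE; case: (x \in A); case: (P x).
Qed.

Lemma double_counting (I J : finType) (X : {set I}) (Y : {set J}) (r : I -> J -> bool) :
  \sum_(i in X) #|[set j in Y | r i j]| = \sum_(j in Y) #|[set i in X | r i j]|.
Proof.
under eq_bigr do rewrite card_set_sum.
under [RHS]eq_bigr do rewrite card_set_sum.
exact: exchange_big.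
Qed.

Definition meeting (I : finType) (T : {set I}) : {set {set I}} :=
  [set b : {set I} | ~~ [disjoint b & T]].

Lemma disjoint_forall_notin (I : finType) (A B : {set I}) :
  [disjoint A & B] = [forall x in A, x \notin B].
Proof.
apply/idP/forall_inP => [dis x xA | notB]; first by rewrite (disjointFr dis xA).
by rewrite disjoint_subset; apply/subsetP => x /notB.
Qed.

Lemma disjoint_cover_meeting (I : finType) (F : {set {set I}}) (T : {set I}) :
  [disjoint T & cover F] = [disjoint F & meeting T].
Proof.
apply/idP/idP => dis.
  rewrite disjoint_subset; apply/subsetP => b bF; rewrite !inE negbK disjoint_sym.
  by apply: disjointWr dis; exact: bigcup_sup.
rewrite disjoint_subset; apply/subsetP => x xT; rewrite inE.
apply/bigcupP => -[b bF xb]; move: (disjointFr dis bF); rewrite inE => /negbFE.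
by move/disjointFr/(_ xb); rewrite xT.
Qed.

Section DesignCounting.

Variables (I : finType) (k : nat) (blocks : {set {set I}}).
Hypothesis card_block : forall b, b \in blocks -> #|b| = k.

Definition blocks_through (T : {set I}) : {set {set I}} := [set b in blocks | T \subset b].

Lemma sum_card_through_setU1 (T : {set I}) :
  \sum_(z in ~: T) #|blocks_through (z |: T)| = (k - #|T|) * #|blocks_through T|.
Proof.
rewrite mulnC -sum_nat_const.
transitivity (\sum_(b in blocks_through T) #|[set z in ~: T | z \in b]|).
  rewrite double_counting; apply: eq_bigr => z _; apply: eq_card => b.
  by rewrite !inE subUset sub1set -andbA [(z \in b) && _]andbC.
apply: eq_bigr => b; rewrite inE => /andP [/card_block <- Tb].
rewrite -(setIidPr Tb) -cardsD; apply: eq_card => z.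
by rewrite !inE; case: (z \in b); case: (z \in T).
Qed.

End DesignCounting.

Section SQS.

Variables (v : nat) (blocks : {set {set 'I_v}}).
Hypothesis sqs : is_SQS blocks.

Lemma SQS_card_block (b : {set 'I_v}) : b \in blocks -> #|b| = 4.
Proof. by case: sqs => card_block _; exact: card_block. Qed.

Lemma SQS_card_through3 (T : {set 'I_v}) : #|T| = 3 -> #|blocks_through blocks T| = 1.
Proof.
case: sqs => _ /[apply] -[b [[bB Tb] b_unique]].
apply/eqP/cards1P; exists b; apply/setP => c; rewrite !inE.
by apply/idP/eqP => [/andP [cB Tc] | ->]; [exact/esym/b_unique | rewrite bB].
Qed.

Lemma SQS_double_card_through2 (P : {set 'I_v}) :
  #|P| = 2 -> 2 * #|blocks_through blocks P| = v - 2.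
Proof.
move=> cardP; have := sum_card_through_setU1 SQS_card_block P.
rewrite (eq_bigr (fun=> 1)) => [|z]; last first.
  by rewrite inE => zP; apply: SQS_card_through3; rewrite cardsU1 zP cardP.
have := cardsC P; rewrite sum1_card card_ord cardP; lia.
Qed.

Lemma SQS_card_through2 (P : {set 'I_v}) :
  #|P| = 2 -> #|blocks_through blocks P| = r2 v.
Proof. by move/SQS_double_card_through2; rewrite /r2 bin1; lia. Qed.

Lemma SQS_card_through1 x : #|blocks_through blocks [set x]| = r1 v.
Proof.
have cardU1 z : z != x -> #|[set z; x]| = 2 by move=> zx; rewrite cards2 zx.
have := sum_card_through_setU1 SQS_card_block [set x].
rewrite (eq_bigr (fun=> r2 v)) => [|z]; last first.
  by rewrite !inE => zx; apply/SQS_card_through2/cardU1.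
rewrite sum_nat_const cardsC1 card_ord cards1 /r1.
(* Matching r1 = C(v - 1, 2) / 3 with (v - 1) r2 / 3 needs v - 2 = 2 r2 even,
   which the pair count provides as soon as a second point exists. *)
have [y /= yx | no_other] := pickP (predC1 x).
  have := SQS_double_card_through2 (cardU1 _ yx).
  rewrite SQS_card_through2 ?cardU1 // bin2 -subn2 => <-.
  by rewrite mulnCA mul2n doubleK => ->; rewrite mulKn.
have -> : v.-1 = 0.
  rewrite -(card_ord v) -(cardsC1 x); apply/eqP; rewrite cards_eq0.
  by apply/eqP/setP => z; rewrite !inE; apply: no_other.
by rewrite bin0n; lia.
Qed.

Lemma SQS_card_setI_le2 (b c : {set 'I_v}) :
  b \in blocks -> c \in blocks -> b != c -> #|b :&: c| <= 2.
Proof.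
move=> bB cB; apply: contraR; rewrite -ltnNge.
move=> /card_geqP [s [s_uniq s_size s_bc]].
have cardT : #|[set y in s]| = 3 by rewrite cardsE (card_uniqP s_uniq).
have sub_bc : [set y in s] \subset b :&: c by apply/subsetP => y; rewrite inE => /s_bc.
have /eqP/cards1P [d through_d] := SQS_card_through3 cardT.
have : b \in blocks_through blocks [set y in s].
  by rewrite inE bB (subset_trans sub_bc (subsetIl _ _)).
have : c \in blocks_through blocks [set y in s].
  by rewrite inE cB (subset_trans sub_bc (subsetIr _ _)).
by rewrite through_d !inE => /eqP -> /eqP ->.
Qed.

Section MeetingBlock.

Variables (B T : {set 'I_v}).
Hypotheses (B_block : B \in blocks) (TB : T \subset B).

Lemma card_other_blocks_through (P : {set 'I_v}) : P \subset B ->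
  #|[set b in blocks :\ B | P \subset b]| = #|blocks_through blocks P|.-1.
Proof.
move=> PB; rewrite (cardsD1 B (blocks_through blocks P)) inE B_block PB /=.
by apply: eq_card => b; rewrite !inE andbA.
Qed.

Lemma SQS_sum_card_setI :
  \sum_(b in blocks :\ B) #|b :&: T| = #|T| * (r1 v).-1.
Proof.
transitivity (\sum_(b in blocks :\ B) #|[set x in T | x \in b]|).
  by apply: eq_bigr => b _; apply: eq_card => x; rewrite !inE andbC.
rewrite double_counting -sum_nat_const; apply: eq_bigr => x xT.
rewrite -(SQS_card_through1 x) -card_other_blocks_through ?sub1set ?(subsetP TB) //.
by apply: eq_card => b; rewrite !inE sub1set.
Qed.

Lemma SQS_sum_bin2_card_setI :
  \sum_(b in blocks :\ B) 'C(#|b :&: T|, 2) = 'C(#|T|, 2) * (r2 v).-1.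
Proof.
pose pairs := [set P : {set 'I_v} | P \subset T & #|P| == 2].
transitivity (\sum_(b in blocks :\ B) #|[set P in pairs | P \subset b]|).
  apply: eq_bigr => b _; rewrite -cards_draws; apply: eq_card => P.
  by rewrite !inE subsetI; case: (P \subset b); case: (P \subset T); rewrite ?andbT ?andbF.
rewrite (double_counting _ _ (fun (b P : {set 'I_v}) => P \subset b)).
rewrite -cards_draws -sum_nat_const; apply: eq_bigr => P.
rewrite inE => /andP [PT /eqP cardP].
by rewrite -(SQS_card_through2 cardP) -card_other_blocks_through // (subset_trans PT TB).
Qed.

Lemma SQS_card_meeting :
  #|(blocks :\ B) :&: meeting T| + 'C(#|T|, 2) * (r2 v).-1 = #|T| * (r1 v).-1.
Proof.
rewrite -SQS_sum_card_setI -SQS_sum_bin2_card_setI.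
rewrite (eq_card (B := [set b in blocks :\ B | b \in meeting T])) => [|b];
  last by rewrite !inE.
rewrite card_set_sum -big_split /=; apply: eq_bigr => b.
rewrite 2!inE => /andP [bB b_block].
have : #|b :&: T| <= 2.
  apply: leq_trans (SQS_card_setI_le2 b_block B_block bB).
  by apply/subset_leq_card/setIS.
by rewrite inE -setI_eq0 -cards_eq0; case: #|_| => [|[|[|]]].
Qed.

End MeetingBlock.

End SQS.

Local Open Scope ring_scope.

Lemma prod_natr_bool (R : comPzSemiRingType) (I : finType) (A : {pred I}) (P : pred I) :
  \prod_(i in A) (P i)%:R = [forall i in A, P i]%:R :> R.
Proof.
have [allP | /forall_inPn [i Ai notPi]] := boolP [forall i in A, P i].
  by rewrite big1 // => i Ai; rewrite (forall_inP allP).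
by rewrite (bigD1 i) //= (negbTE notPi) mul0r.
Qed.

Lemma prodD_powerset (R : comPzSemiRingType) (I : finType) (S : {set I}) (f g : I -> R) :
  \prod_(i in S) (f i + g i) =
  \sum_(A in powerset S) (\prod_(i in A) f i) * \prod_(i in S :\: A) g i.
Proof.
pose F i := if i \in S then f i else 0.
pose G i := if i \in S then g i else 1.
rewrite big_mkcond (eq_bigr (fun i => F i + G i)); last first.
  by move=> i _; rewrite /F /G; case: (i \in S); rewrite ?add0r.
rewrite bigA_distr [RHS]big_mkcond; apply: eq_bigr => A _.
rewrite (bigID (mem A)) /= powersetE.
have [AS | /subsetPn [i Ai notSi]] := boolP (A \subset S); last first.
  by rewrite (bigD1 i) //= Ai /F (negbTE notSi) !mul0r.
congr (_ * _).
  by apply: eq_bigr => i Ai; rewrite Ai /F (subsetP AS).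
rewrite big_mkcond [RHS]big_mkcond; apply: eq_bigr => i _.
by rewrite !inE /G; case: (i \in A); case: (i \in S).
Qed.

Lemma sum_powerset_card (R : nmodType) (I : finType) (B : {set I}) (F : nat -> R) :
  \sum_(T in powerset B) F #|T| = \sum_(k < #|B|.+1) F k *+ 'C(#|B|, k).
Proof.
have cardT T : T \in powerset B -> (#|T| < #|B|.+1)%N.
  by rewrite powersetE ltnS => /subset_leq_card.
rewrite (partition_big (fun T : {set I} => inord #|T| : 'I_#|B|.+1) predT) //=.
apply: eq_bigr => k _; rewrite -cards_draws -sumr_const.
apply: eq_big => [T|T /andP [BT /eqP <-]]; last by rewrite inordK ?cardT.
rewrite inE -powersetE; have [BT /= | //] := boolP (T \in powerset B).
by rewrite -(inj_eq val_inj) /= inordK ?cardT.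
Qed.

Lemma sum_powerset_weight_disjoint (R : comPzRingType) (I : finType) (S N : {set I}) (p : R) :
  \sum_(A in powerset S) p ^+ #|A| * (1 - p) ^+ (#|S| - #|A|)%N * [disjoint A & N]%:R
  = (1 - p) ^+ #|S :&: N|.
Proof.
have := prodD_powerset S (fun i => p * (i \notin N)%:R) (fun=> 1 - p).
rewrite (big_setID N) /= -prodr_const.
rewrite [X in X * _ = _](eq_bigr (fun=> 1 - p)) => [|i /setIP [_ ->]];
  last by rewrite mulr0 add0r.
rewrite [X in _ * X = _]big1 ?mulr1 => [->|i /setDP [_ /negbTE ->]];
  last by rewrite mulr1 subrKC.
apply: eq_bigr => A; rewrite powersetE => AS.
rewrite big_split /= !prodr_const prod_natr_bool cardsD (setIidPr AS) mulrAC.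
by rewrite disjoint_forall_notin.
Qed.

Lemma subset_cover_inclusion_exclusion (R : comPzRingType) (I : finType)
    (F : {set {set I}}) (B : {set I}) :
  (B \subset cover F)%:R =
  \sum_(T in powerset B) (-1) ^+ #|T| * [disjoint F & meeting T]%:R :> R.
Proof.
have := prodD_powerset B (fun x => - (x \notin cover F)%:R) (fun=> 1 : R).
rewrite (eq_bigr (fun x => (x \in cover F)%:R)) => [|x _]; last first.
  by case: (x \in cover F); rewrite ?oppr0 ?add0r ?addNr.
have -> : B \subset cover F = [forall x in B, x \in cover F].
  by apply/subsetP/forall_inP.
rewrite prod_natr_bool => ->; apply: eq_bigr => T _.
by rewrite big1_eq mulr1 prodrN prod_natr_bool -disjoint_cover_meeting disjoint_forall_notin.
Qed.

Lemma exists_repair_set (v : nat) (blocks : {set {set 'I_v}}) (B : {set 'I_v})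
    (A : {set {set 'I_v}}) :
  A \subset blocks :\ B ->
  [exists P in powerset A, is_repair_set blocks B P] = (B \subset cover A).
Proof.
move=> Ablocks; apply/exists_inP/idP => [[P] | BA].
  rewrite powersetE => PA /andP [_ BP]; apply: subset_trans BP _.
  by apply/bigcupsP => b bP; apply: bigcup_sup (subsetP PA b bP).
by exists A; rewrite ?powersetE // /is_repair_set Ablocks.
Qed.

Lemma reliability_inclusion_exclusion (R : comNzRingType) (v : nat)
    (blocks : {set {set 'I_v}}) (B : {set 'I_v}) (p : R) :
  reliability blocks B p =
  \sum_(T in powerset B) (-1) ^+ #|T| * (1 - p) ^+ #|(blocks :\ B) :&: meeting T|.
Proof.
rewrite /reliability.
under eq_bigr => A /[!powersetE] /exists_repair_set -> do
  rewrite (subset_cover_inclusion_exclusion R) big_distrr.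
rewrite exchange_big /=; apply: eq_bigr => T _.
rewrite -sum_powerset_weight_disjoint big_distrr /=; apply: eq_bigr => A _.
by rewrite mulrCA mulrA.
Qed.

Lemma SQS_reliability (R : comNzRingType) (v : nat) (blocks : {set {set 'I_v}})
    (B : {set 'I_v}) (p : R) :
  is_SQS blocks -> B \in blocks ->
  reliability blocks B p =
  \sum_(k < 5) (-1) ^+ k * (1 - p) ^+ (k * (r1 v).-1 - 'C(k, 2) * (r2 v).-1) *+ 'C(4, k).
Proof.
move=> sqs B_block; rewrite reliability_inclusion_exclusion.
under eq_bigr => T /[!powersetE] /(SQS_card_meeting sqs B_block) /(canRL (addnK _)) -> do [].
pose e k := (k * (r1 v).-1 - 'C(k, 2) * (r2 v).-1)%N.
rewrite (sum_powerset_card B (fun k => (-1) ^+ k * (1 - p) ^+ e k)).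
by rewrite (SQS_card_block sqs B_block).
Qed.

Theorem mainTheorem9 (R : realFieldType) (v : nat)
  (blocks : {set {set 'I_v}}) (B : {set 'I_v}) (p : R) :
  is_SQS blocks -> B \in blocks -> 0 <= p -> p <= 1 ->
  let q := 1 - p in
  reliability blocks B p =
    1 - 4 * q ^+ ((r1 v).-1)
      + 6 * q ^+ (2 * r1 v - r2 v - 1)%N
      - 4 * q ^+ (3 * r1 v - 3 * r2 v)%N
      + q ^+ (4 * r1 v + 2 - 6 * r2 v)%N.
Proof.
move=> sqs B_block _ _ q.
have r2_gt0 : (0 < r2 v)%N.
  have : (4 <= v)%N.
    by rewrite -(SQS_card_block sqs B_block) -[X in (_ <= X)%N]card_ord max_card.
  by rewrite /r2 bin1; lia.
rewrite (SQS_reliability _ sqs B_block) !big_ord_recr big_ord0 /= -/q.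
have -> : (2 * (r1 v).-1 - 'C(2, 2) * (r2 v).-1 = 2 * r1 v - r2 v - 1)%N by rewrite binn; lia.
have -> : (3 * (r1 v).-1 - 'C(3, 2) * (r2 v).-1 = 3 * r1 v - 3 * r2 v)%N.
  by rewrite [in LHS](_ : 'C(3, 2) = 3) //; lia.
have -> : (4 * (r1 v).-1 - 'C(4, 2) * (r2 v).-1 = 4 * r1 v + 2 - 6 * r2 v)%N.
  by rewrite [in LHS](_ : 'C(4, 2) = 6) //; lia.
rewrite (@bin_small 0 2) // (@bin_small 1 2) // !mul0n mul1n !subn0.
rewrite bin0 binn (_ : 'C(4, 1) = 4%N) // (_ : 'C(4, 2) = 6%N) // (_ : 'C(4, 3) = 4%N) //.
ring.
Qed.
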